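(* Let $1\le k<n$. The transition matrix $K$ of the Burnside process on $[k]^n$ satisfies $$K(u,v)\ge\frac{1}{(k-1)!\,k^n}\quad\text{for all }u,v\in[k]^n.$$
   Context: $S_k$ acts on $[k]^n$ by $\sigma(u_1,\dots,u_n)=(\sigma(u_1),\dots,\sigma(u_n))$. The Burnside process on $[k]^n$ is the Markov chain which, from $u$, chooses $\sigma$ uniformly among permutations of $[k]$ fixing every value appearing in $u$, then produces $v\in[k]^n$ by choosing each coordinate independently and uniformly among the fixed points of $\sigma$; i.e. $K(u,v)=\sum_{\sigma\in G_u\cap G_v}\frac{1}{|G_u|\,\mathrm{fp}(\sigma)^n}$ with $G_u=\{\sigma:\sigma u=u\}$ and $\mathrm{fp}(\sigma)$ the number of fixed points of $\sigma$. *)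

From HB Require Import structures.
From mathcomp Require Import all_boot all_order all_algebra all_fingroup.
Set Implicit Arguments. Unset Strict Implicit. Unset Printing Implicit Defensive.
Import Order.TTheory GRing.Theory Num.Theory.

Definition fp (k : nat) (s : {perm 'I_k}) : nat := #|[set x | s x == x]|.

Definition stab (k n : nat) (u : {ffun 'I_n -> 'I_k}) : {set {perm 'I_k}} :=
  [set s : {perm 'I_k} | [ffun i => s (u i)] == u].

Definition burnsideK (k n : nat) (u v : {ffun 'I_n -> 'I_k}) : rat :=
  \sum_(s in stab u :&: stab v)
     (1 / ((#|stab u|)%:R * ((fp s)%:R ^+ n)))%R.

From HB Require Import structures.
From mathcomp Require Import all_boot all_order all_algebra all_fingroup.
Import Order.TTheory GRing.Theory Num.Theory.

(* The identity alone contributes [1 / (|G_u| k^n)] to [K(u,v)], and [G_u]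
   fixes the value [u_0], so it lies in a point stabiliser of [S_k], whose
   order is [(k-1)!]. *)

Lemma card_perm_astab1 {k : nat} (x : 'I_k) : #|'C[x | 'P]%g| = (k.-1)`!.
Proof.
have := card_orbit_stab 'P [set: {perm 'I_k}]%G x.
have -> : orbit 'P [set: {perm 'I_k}]%G x = setT.
  apply/setP => y; rewrite inE; apply/orbitP; exists (tperm x y); rewrite ?inE //.
  by rewrite /= apermE tpermL.
rewrite setTI !cardsT card_ord card_Sn.
case: k x => [[]//|k] x /=.
by rewrite factS => /eqP; rewrite eqn_pmul2l // => /eqP.
Qed.

Lemma stab_subset_astab1 {k n : nat} (u : {ffun 'I_n -> 'I_k}) (i : 'I_n) :
  stab u \subset 'C[u i | 'P]%g.
Proof.
apply/subsetP => s; rewrite inE => /eqP su_u.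
apply/astab1P; rewrite /= apermE.
by move/ffunP: su_u => /(_ i); rewrite ffunE.
Qed.

Lemma card_stab_le {k n : nat} (u : {ffun 'I_n -> 'I_k}) :
  (0 < n)%N -> (#|stab u| <= (k.-1)`!)%N.
Proof.
move=> n_gt0; have i0 : 'I_n := Ordinal n_gt0.
rewrite -(card_perm_astab1 (u i0)).
exact/subset_leq_card/stab_subset_astab1.
Qed.

Lemma perm1_in_stab {k n : nat} (u : {ffun 'I_n -> 'I_k}) : 1%g \in stab u.
Proof. by rewrite inE; apply/eqP/ffunP => i; rewrite ffunE perm1. Qed.

Lemma fp_perm1 {k : nat} : fp (1%g : {perm 'I_k}) = k.
Proof. by rewrite /fp -[RHS]card_ord; apply: eq_card => x; rewrite inE perm1 eqxx. Qed.

Lemma burnsideK_ge_perm1_term {k n : nat} (u v : {ffun 'I_n -> 'I_k}) :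
  (1 / ((#|stab u|)%:R * (k%:R ^+ n)) <= burnsideK u v :> rat)%R.
Proof.
have one_uv : (1%g : {perm 'I_k}) \in stab u :&: stab v.
  by rewrite inE !perm1_in_stab.
rewrite /burnsideK (bigD1 _ one_uv) /= fp_perm1 lerDl.
by apply: sumr_ge0 => s _; rewrite div1r invr_ge0 mulr_ge0 // exprn_ge0.
Qed.

Theorem lemma4p4 (k n : nat) (hk : (1 <= k)%N) (hkn : (k < n)%N)
  (u v : {ffun 'I_n -> 'I_k}) :
  (1 / (((k.-1)`!)%:R * (k%:R ^+ n)) <= burnsideK u v :> rat)%R.
Proof.
apply: le_trans _ (burnsideK_ge_perm1_term u v).
have stab_gt0 : (0 < #|stab u|)%N by apply/card_gt0P; exists 1%g; exact: perm1_in_stab.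
have kn_gt0 : (0 < k%:R ^+ n :> rat)%R by rewrite exprn_gt0 ?ltr0n.
rewrite !div1r lef_pV2 ?posrE ?mulr_gt0 ?ltr0n ?fact_gt0 //.
by rewrite ler_pM2r // ler_nat card_stab_le // (leq_ltn_trans _ hkn).
Qed.
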